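(* Let $a_{01},a_{10}>0$, $a_\triangle=a_{01}+a_{10}$, and let $x_\triangle\ge 0$ be a fixed integer. Under $H$, let $\theta\in(0,1)$ have prior $p_H(\theta)=\mathrm{Beta}(\theta\mid a_{01},a_{10})$, and let imaginary data $x_{01}\in\{0,\dots,x_\triangle\}$ have conditional sampling distribution $h(x_{01}\mid x_\triangle,\theta)=\binom{x_\triangle}{x_{01}}\theta^{x_{01}}(1-\theta)^{x_\triangle-x_{01}}$; under $H_0$, $\theta=1/2$. Define $$BF^{Co}_{H,H_0}(x)=\frac{\int_0^1 h(x_{01}\mid x_\triangle,\theta)p_H(\theta)\,d\theta}{h(x_{01}\mid x_\triangle,1/2)}$$ and the conditionally-intrinsic prior $p^{CI}_H(\theta\mid H_0)=p_H(\theta)\,E_\theta\big[BF^{Co}_{H,H_0}(x)^{-1}\big]$, the expectation being with respect to $x_{01}\sim h(\cdot\mid x_\triangle,\theta)$. Then $$p^{CI}_H(\theta\mid H_0)=\sum_{x_{01}=0}^{x_\triangle}\binom{x_\triangle}{x_{01}}\left(\frac12\right)^{x_\triangle}\mathrm{Beta}\big(\theta\mid a_{01}+x_{01},\,a_\triangle-a_{01}+x_\triangle-x_{01}\big).$$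
   Context: $\mathrm{Beta}(\theta\mid A,B)=\theta^{A-1}(1-\theta)^{B-1}/B(A,B)$ denotes the Beta density with parameters $A,B>0$ evaluated at $\theta$, where $B(A,B)=\int_0^1t^{A-1}(1-t)^{B-1}dt$. In the paper's motivation, $\theta$ is the conditional probability of a $0\to1$ swing given a swing in a matched-pair $2\times2$ table, $x_{01}$ and $x_{10}=x_\triangle-x_{01}$ are imaginary off-diagonal counts, and the Beta$(a_{01},a_{10})$ prior arises from a Dirichlet$(a_{00},a_{01},a_{10},a_{11})$ prior on the cell probabilities. *)

From mathcomp Require Import all_boot all_order all_algebra.
From mathcomp Require Import all_classical all_reals all_analysis.
Set Implicit Arguments. Unset Strict Implicit. Unset Printing Implicit Defensive.
Import Order.TTheory GRing.Theory Num.Theory.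
Import numFieldNormedType.Exports.
Local Open Scope classical_set_scope.
Local Open Scope ring_scope.

Section Defs.
Variable R : realType.

Definition betaB (A B : R) : R :=
  \int[@lebesgue_measure R]_(t in `]0, 1[) (t `^ (A - 1) * (1 - t) `^ (B - 1)).

Definition beta_dens (A B theta : R) : R :=
  theta `^ (A - 1) * (1 - theta) `^ (B - 1) / betaB A B.

Definition h_samp (xtri x01 : nat) (theta : R) : R :=
  'C(xtri, x01)%:R * theta ^+ x01 * (1 - theta) ^+ (xtri - x01).

Definition BF_Co (a01 a10 : R) (xtri x01 : nat) : R :=
  (\int[@lebesgue_measure R]_(theta in `]0, 1[)
      (h_samp xtri x01 theta * beta_dens a01 a10 theta))
  / h_samp xtri x01 (1 / 2).

Definition ci_prior (a01 a10 : R) (xtri : nat) (theta : R) : R :=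
  beta_dens a01 a10 theta *
  \sum_(x01 < xtri.+1) h_samp xtri x01 theta * (BF_Co a01 a10 xtri x01)^-1.

End Defs.

(* The Bayes factor of x01 is a ratio of Beta integrals: the marginal likelihood
   is C(n, x01) B(a01 + x01, a10 + n - x01) / B(a01, a10), and the null
   likelihood is C(n, x01) 2^-n.  Multiplying its inverse by h(x01 | theta) and
   the prior, the normaliser B(a01, a10) cancels and the remaining kernel is
   2^-n C(n, x01) times the Beta(a01 + x01, a10 + n - x01) density.  The only
   analytic input is 0 < B(A, B) < oo for A, B > 0: the kernel is dominated by a
   multiple of t^(A-1) + (1-t)^(B-1), whose integrals over closed subintervals
   exhausting ]0, 1[ are bounded by the fundamental theorem of calculus, and it
   is bounded below by a positive constant on [1/4, 3/4]. *)

From mathcomp Require Import all_boot all_order all_algebra.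
From mathcomp Require Import all_classical all_reals all_analysis.
From mathcomp Require Import measurable_realfun ring lra.
Set Implicit Arguments. Unset Strict Implicit. Unset Printing Implicit Defensive.
Import Order.TTheory GRing.Theory Num.Theory.
Import numFieldNormedType.Exports.
Local Open Scope classical_set_scope.
Local Open Scope ring_scope.

Section ge0_integral_bigcup.
Local Open Scope ereal_scope.
Context {d : measure_display} {T : measurableType d} {R : realType}.
Variables (mu : measure T R) (F : (set T)^nat) (f : T -> \bar R).
Hypotheses (nndF : nondecreasing_seq F) (mF : forall n, measurable (F n)).
Hypotheses (mf : forall n, measurable_fun (F n) f) (f0 : forall n x, F n x -> 0 <= f x).

Lemma ge0_integral_bigcup_le (M : \bar R) :
  (forall n, \int[mu]_(x in F n) f x <= M) ->
  \int[mu]_(x in \bigcup_n F n) f x <= M.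
Proof.
move=> FM.
have cvF := @ge0_nondecreasing_set_cvg_integral _ _ _ F f mu nndF mF mf f0.
rewrite -(cvg_lim _ cvF) //; apply: lime_le; first exact: cvgP cvF.
exact: nearW.
Qed.

End ge0_integral_bigcup.

Lemma add_nat_gt0 (R : numDomainType) (b : R) (n : nat) : 0 < b -> 0 < b + n%:R.
Proof. by move=> b0; rewrite ltr_wpDr. Qed.

Lemma add_natB_gt0 (R : numDomainType) (b : R) (n k : nat) :
  0 < b -> (k <= n)%N -> 0 < b + n%:R - k%:R.
Proof. by move=> b0 kn; rewrite -addrA -natrB // ltr_wpDr. Qed.

Section beta_kernel.
Variable R : realType.
Local Notation mu := (@lebesgue_measure R).

Lemma powR_bounds (m x r : R) : 0 < m -> m <= x -> x <= 1 ->
  expR (- (`|r| * - ln m)) <= x `^ r <= expR (`|r| * - ln m).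
Proof.
move=> m0 mx x1; have x0 : 0 < x by apply: lt_le_trans mx.
have lnx_ge : ln m <= ln x by rewrite ler_ln // posrE.
have lnx_le0 : ln x <= 0 by rewrite ln_le0.
have : `|r * ln x| <= `|r| * - ln m by rewrite normrM ler_wpM2l // ler0_norm //; lra.
rewrite /powR gt_eqF // ler_norml => /andP[lb ub].
by rewrite !ler_expR lb ub.
Qed.

Lemma continuous_powR_gt0 (p x : R) : 0 < x -> {for x, continuous (@powR R ^~ p)}.
Proof.
move=> x0; apply/differentiable_continuous; rewrite -derivable1_diffP.
by apply: derivable_powR; rewrite in_itv /= andbT.
Qed.

Lemma measurable_onem_powR (q : R) : measurable_fun setT (fun x : R => (1 - x) `^ q).
Proof.
apply: (@measurableT_comp _ _ _ _ _ _ (@powR R ^~ q)); first exact: measurable_powR.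
by apply: measurable_funB => //; exact: measurable_cst.
Qed.

Lemma integral_powR_le (p e : R) : -1 < p -> 0 < e -> e < 1 ->
  (\int[mu]_(x in `[e, 1%R]) (x `^ p)%:E <= (p + 1)^-1%:E)%E.
Proof.
move=> p1 e0 e1; have p10 : 0 < p + 1 by lra.
pose F (x : R) := (p + 1)^-1 * x `^ (p + 1).
have dF (x : R) : 0 < x -> is_derive x 1 F ((p + 1)^-1 *: ((p + 1) * x `^ (p + 1 - 1))).
  by move=> x0; apply: is_deriveZ; exact: is_derive1_powR.
have cpowR : {within `[e, 1], continuous (@powR R ^~ p)}.
  apply: derivable_within_continuous => x; rewrite in_itv /= => /andP[ex _].
  by apply: derivable_powR; rewrite in_itv /= andbT; lra.
have dFo : derivable_oo_LRcontinuous F e 1.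
  split.
  - move=> x; rewrite in_itv /= => /andP[ex _].
    by have [] := dF x ltac:(lra).
  - apply: cvg_at_right_filter; apply/differentiable_continuous.
    by rewrite -derivable1_diffP; have [] := dF e e0.
  - apply: cvg_at_left_filter; apply/differentiable_continuous.
    by rewrite -derivable1_diffP; have [] := dF 1 ltr01.
have F'E : {in `]e, 1[, F^`()%classic =1 @powR R ^~ p}.
  move=> x; rewrite in_itv /= => /andP[ex _].
  rewrite derive1E; have [_ ->] := dF x ltac:(lra).
  by rewrite addrK -mulr_algl scaler1 mulrA mulVf ?mul1r // gt_eqF.
rewrite (continuous_FTC2 e1 cpowR dFo F'E) -EFinB lee_fin /F powR1 mulr1.
by rewrite lerBlDr lerDl mulr_ge0 // ?invr_ge0 ?powR_ge0 // ltW.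
Qed.

Lemma integral_onem_powR_le (q e : R) : -1 < q -> 0 < e -> e < 1 ->
  (\int[mu]_(x in `[0%R, (1 - e)%R]) ((1 - x) `^ q)%:E <= (q + 1)^-1%:E)%E.
Proof.
move=> q1 e0 e1; have e01 : 0 <= 1 - e <= 1 by apply/andP; split; lra.
rewrite (@integration_by_substitution_onem R (fun x => (1 - x) `^ q) _ e01).
  rewrite /unstable.onem subKr; under eq_integral do rewrite subKr.
  exact: integral_powR_le.
apply: continuous_in_subspaceT => x; rewrite inE /= in_itv /= => /andP[_ xe].
apply: (@continuous_comp _ _ _ (fun x : R => 1 - x) (@powR R ^~ q)).
  by apply: continuousB => //; exact: cvg_cst.
by apply: continuous_powR_gt0; lra.
Qed.

Definition beta_kernel (p q t : R) := t `^ p * (1 - t) `^ q.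

Lemma beta_kernel_ge0 p q t : 0 <= beta_kernel p q t.
Proof. by rewrite mulr_ge0 // powR_ge0. Qed.

Lemma measurable_beta_kernel p q : measurable_fun setT (beta_kernel p q).
Proof. by apply: measurable_funM; [exact: measurable_powR|exact: measurable_onem_powR]. Qed.

(* Each factor is bounded on the half of ]0,1[ where the other one may blow up. *)
Lemma beta_kernel_le p q t : 0 < t < 1 ->
  beta_kernel p q t <= (expR (`|p| * - ln 2^-1) + expR (`|q| * - ln 2^-1)) *
                       (t `^ p + (1 - t) `^ q).
Proof.
move=> /andP[t0 t1].
set Kp := expR _; set Kq := expR _.
have Kp0 : 0 <= Kp := expR_ge0 _; have Kq0 : 0 <= Kq := expR_ge0 _.
have half0 : (0 : R) < 2^-1 by rewrite invr_gt0.
have tp0 := powR_ge0 t p; have tq0 := powR_ge0 (1 - t) q.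
rewrite /beta_kernel; have [tle|tgt] := leP t 2^-1.
- have /andP[_ ub] := @powR_bounds 2^-1 (1 - t) q half0 ltac:(lra) ltac:(lra).
  have : t `^ p * (1 - t) `^ q <= t `^ p * Kq by rewrite ler_wpM2l.
  nra.
- have /andP[_ ub] := @powR_bounds 2^-1 t p half0 ltac:(lra) ltac:(lra).
  have : t `^ p * (1 - t) `^ q <= Kp * (1 - t) `^ q by rewrite ler_wpM2r.
  nra.
Qed.

Definition inner_itv (n : nat) : set R := `[n.+3%:R^-1, 1 - n.+3%:R^-1].

Lemma inner_itv_nondecreasing : nondecreasing_seq inner_itv.
Proof.
move=> n m nm; rewrite subsetEset => x.
rewrite /inner_itv /= !in_itv /= => /andP[lb ub].
have : (m.+3%:R : R)^-1 <= n.+3%:R^-1 by rewrite lef_pV2 ?posrE ?ltr0n // ler_nat.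
by move: lb ub; move: (n.+3%:R^-1) (m.+3%:R^-1) => a b ? ? ?; apply/andP; split; lra.
Qed.

Lemma inner_itv_sub n : inner_itv n `<=` `]0, 1[%classic.
Proof.
move=> x; rewrite /inner_itv /= !in_itv /= => /andP[lb ub].
have e0 : (0 : R) < n.+3%:R^-1 by rewrite invr_gt0 ltr0n.
by move: lb ub e0; move: (n.+3%:R^-1) => e ? ? ?; apply/andP; split; lra.
Qed.

Lemma bigcup_inner_itv : \bigcup_n inner_itv n = `]0, 1[%classic.
Proof.
apply/seteqP; split; first by move=> x [n _]; exact: inner_itv_sub.
move=> x /=; rewrite in_itv /= => /andP[x0 x1].
set m := Num.min x (1 - x).
have m0 : 0 < m by rewrite lt_min; apply/andP; split; lra.
have := @archi_boundP R m^-1 ltac:(by rewrite invr_ge0 ltW).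
set N := Num.Def.archi_bound _ => mN; exists N => //; rewrite /inner_itv /= in_itv /=.
have : (N.+3%:R : R)^-1 <= m.
  rewrite -[m]invrK lef_pV2 ?posrE ?invr_gt0 ?ltr0n //.
  by apply/ltW/(lt_le_trans mN); rewrite ler_nat -addn3 leq_addr.
have : m <= x by rewrite ge_min lexx.
have : m <= 1 - x by rewrite ge_min lexx orbT.
by move: (N.+3%:R^-1 : R) => e ? ? ?; apply/andP; split; lra.
Qed.

Lemma integral_powR_add_onem_powR_inner_le p q n : -1 < p -> -1 < q ->
  (\int[mu]_(x in inner_itv n) ((x `^ p)%:E + ((1 - x) `^ q)%:E)
     <= ((p + 1)^-1 + (q + 1)^-1)%:E)%E.
Proof.
move=> p1 q1; have mI : measurable (inner_itv n) by exact: measurable_itv.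
have e0 : (0 : R) < n.+3%:R^-1 by rewrite invr_gt0 ltr0n.
have e1 : (n.+3%:R : R)^-1 < 1 by rewrite invf_lt1 ?ltr0n // ltr1n.
have mp : measurable_fun (inner_itv n) (fun x => (x `^ p)%:E).
  by apply/measurable_EFinP/measurable_funTS; exact: measurable_powR.
have mq : measurable_fun (inner_itv n) (fun x => ((1 - x) `^ q)%:E).
  by apply/measurable_EFinP/measurable_funTS; exact: measurable_onem_powR.
rewrite ge0_integralD //; last 2 first.
- by move=> x _; rewrite lee_fin powR_ge0.
- by move=> x _; rewrite lee_fin powR_ge0.
rewrite EFinD; apply: leeD.
- apply: le_trans _ (integral_powR_le p1 e0 e1).
  apply: ge0_subset_integral => //.
  + by apply/measurable_EFinP/measurable_funTS; exact: measurable_powR.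
  + by move=> x _; rewrite lee_fin powR_ge0.
  + move=> x; rewrite /inner_itv /= !in_itv /= => /andP[-> ub] /=.
    by apply: le_trans ub _; rewrite gerDl oppr_le0 ltW.
- apply: le_trans _ (integral_onem_powR_le q1 e0 e1).
  apply: ge0_subset_integral => //.
  + by apply/measurable_EFinP/measurable_funTS; exact: measurable_onem_powR.
  + by move=> x _; rewrite lee_fin powR_ge0.
  + move=> x; rewrite /inner_itv /= !in_itv /= => /andP[lb ->].
    by rewrite andbT (le_trans _ lb) // ltW.
Qed.

Lemma integral_beta_kernel_inner_le p q n : -1 < p -> -1 < q ->
  (\int[mu]_(x in inner_itv n) (beta_kernel p q x)%:E <=
   ((expR (`|p| * - ln 2^-1) + expR (`|q| * - ln 2^-1)) *
    ((p + 1)^-1 + (q + 1)^-1))%:E)%E.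
Proof.
move=> p1 q1; set K := _ + _; have K0 : 0 <= K by rewrite addr_ge0 // expR_ge0.
have mI : measurable (inner_itv n) by exact: measurable_itv.
apply: (@le_trans _ _ (\int[mu]_(x in inner_itv n)
    (K%:E * ((x `^ p)%:E + ((1 - x) `^ q)%:E)))%E).
  apply: ge0_le_integral => //.
  - by move=> x _; rewrite lee_fin beta_kernel_ge0.
  - by apply/measurable_EFinP/measurable_funTS; exact: measurable_beta_kernel.
  - apply: emeasurable_funM => //; apply: emeasurable_funD;
      apply/measurable_EFinP/measurable_funTS;
      [exact: measurable_powR|exact: measurable_onem_powR].
  - move=> x /inner_itv_sub /=; rewrite in_itv /= => x01.
    by rewrite -EFinD -EFinM lee_fin beta_kernel_le.
rewrite ge0_integralZl_EFin //; last 2 first.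
- by move=> x _; rewrite adde_ge0 // lee_fin powR_ge0.
- apply: emeasurable_funD; apply/measurable_EFinP/measurable_funTS;
    [exact: measurable_powR|exact: measurable_onem_powR].
by rewrite EFinM lee_wpmul2l ?lee_fin // integral_powR_add_onem_powR_inner_le.
Qed.

Lemma integrable_beta_kernel p q : -1 < p -> -1 < q ->
  mu.-integrable (`]0, 1[ : set R) (EFin \o beta_kernel p q).
Proof.
move=> p1 q1; have mk : measurable_fun (`]0, 1[ : set R) (EFin \o beta_kernel p q).
  by apply/measurable_EFinP/measurable_funTS; exact: measurable_beta_kernel.
apply/integrableP; split => //.
under eq_integral => x _ do rewrite /comp gee0_abs ?lee_fin ?beta_kernel_ge0 //.
apply: le_lt_trans (ltry _); rewrite -bigcup_inner_itv.
apply: ge0_integral_bigcup_le.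
- exact: inner_itv_nondecreasing.
- by move=> n; exact: measurable_itv.
- by move=> n; apply/measurable_EFinP/measurable_funTS; exact: measurable_beta_kernel.
- by move=> n x _; rewrite lee_fin beta_kernel_ge0.
- by move=> n; exact: integral_beta_kernel_inner_le.
Qed.

Lemma integral_beta_kernel_gt0 (p q : R) :
  (0 < \int[mu]_(x in `]0%R, 1%R[) (beta_kernel p q x)%:E)%E.
Proof.
have quarter0 : (0 : R) < 4^-1 by rewrite invr_gt0.
set c := expR (- (`|p| * - ln 4^-1)) * expR (- (`|q| * - ln 4^-1)).
have c0 : 0 < c by rewrite mulr_gt0 // expR_gt0.
pose A : set R := `[4^-1, 3/4]%classic; have mA : measurable A by exact: measurable_itv.
apply: (@lt_le_trans _ _ (\int[mu]_(x in A) c%:E)%E).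
  have muA : mu A = (3/4 - 4^-1)%:E.
    by rewrite lebesgue_measure_itv /= lte_fin ifT -?EFinD //; lra.
  rewrite integral_cst //; change (0 < c%:E * mu A)%E.
  by rewrite muA -EFinM lte_fin mulr_gt0 //; lra.
apply: (@le_trans _ _ (\int[mu]_(x in A) (beta_kernel p q x)%:E)%E).
  apply: ge0_le_integral => //.
  - by move=> x _; rewrite lee_fin ltW.
  - by apply/measurable_EFinP/measurable_funTS; exact: measurable_beta_kernel.
  - move=> x; rewrite /A /= in_itv /= => /andP[x1 x2]; rewrite lee_fin.
    have /andP[lbp _] := @powR_bounds 4^-1 x p quarter0 x1 ltac:(lra).
    have /andP[lbq _] := @powR_bounds 4^-1 (1 - x) q quarter0 ltac:(lra) ltac:(lra).
    by apply: ler_pM => //; apply/ltW/expR_gt0.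
apply: ge0_subset_integral => //.
- by apply/measurable_EFinP/measurable_funTS; exact: measurable_beta_kernel.
- by move=> x _; rewrite lee_fin beta_kernel_ge0.
- by move=> x; rewrite /A /= !in_itv /= => /andP[x1 x2]; apply/andP; split; lra.
Qed.

Lemma betaB_gt0 (A B : R) : 0 < A -> 0 < B -> 0 < betaB A B.
Proof.
move=> A0 B0; apply: fine_gt0; rewrite integral_beta_kernel_gt0 /=.
by apply: integrable_lty => //; apply: integrable_beta_kernel; lra.
Qed.

Lemma exprn_mul_powR (x r : R) (m : nat) : 0 < x -> x ^+ m * x `^ r = x `^ (r + m%:R).
Proof.
move=> x0; rewrite powRD; last by apply/implyP => _; rewrite gt_eqF.
by rewrite powR_mulrn ?ltW // mulrC.
Qed.

Lemma beta_densE (A B t : R) :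
  beta_dens A B t = beta_kernel (A - 1) (B - 1) t / betaB A B.
Proof. by []. Qed.

Lemma h_samp_mul_beta_dens (a b t : R) (n k : nat) : 0 < t < 1 -> (k <= n)%N ->
  h_samp n k t * beta_dens a b t =
  'C(n, k)%:R / betaB a b * beta_kernel (a + k%:R - 1) (b + n%:R - k%:R - 1) t.
Proof.
move=> /andP[t0 t1] kn; rewrite /h_samp /beta_dens /beta_kernel.
have -> : a + k%:R - 1 = (a - 1) + k%:R by ring.
have -> : b + n%:R - k%:R - 1 = (b - 1) + (n - k)%:R by rewrite natrB //; ring.
rewrite -!exprn_mul_powR ?subr_gt0 //; ring.
Qed.

Lemma Rintegral_h_samp_beta_dens (a b : R) (n k : nat) : 0 < a -> 0 < b -> (k <= n)%N ->
  \int[mu]_(t in `]0, 1[) (h_samp n k t * beta_dens a b t) =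
  'C(n, k)%:R / betaB a b * betaB (a + k%:R) (b + n%:R - k%:R).
Proof.
move=> a0 b0 kn.
rewrite (@eq_Rintegral _ _ _ mu _ (fun t => 'C(n, k)%:R / betaB a b *
    beta_kernel (a + k%:R - 1) (b + n%:R - k%:R - 1) t)); last first.
  by move=> t; rewrite inE /= in_itv /= => t01; exact: h_samp_mul_beta_dens.
rewrite RintegralZl //.
have := add_nat_gt0 k a0; have := add_natB_gt0 b0 kn.
by move=> ? ?; apply: integrable_beta_kernel; lra.
Qed.

Lemma h_samp_half (n k : nat) : (k <= n)%N ->
  h_samp n k (1 / 2 : R) = 'C(n, k)%:R * (1 / 2) ^+ n.
Proof.
move=> kn; rewrite /h_samp (_ : 1 - 1 / 2 = 1 / 2 :> R); last by field.
by rewrite -mulrA -exprD subnKC.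
Qed.

End beta_kernel.

Theorem proposition5 (R : realType) (a01 a10 : R) (xtri : nat) (theta : R) :
  0 < a01 -> 0 < a10 -> 0 < theta < 1 ->
  let atri := a01 + a10 in
  ci_prior a01 a10 xtri theta =
  \sum_(x01 < xtri.+1)
     'C(xtri, x01)%:R * (1 / 2) ^+ xtri *
     beta_dens (a01 + x01%:R) (atri - a01 + xtri%:R - x01%:R) theta.
Proof.
move=> a0 b0 t01 atri; rewrite (_ : atri - a01 = a10); last by rewrite /atri; ring.
rewrite /ci_prior big_distrr /=; apply: eq_bigr => k _.
have kn : (k <= xtri)%N by rewrite -ltnS.
have B0 : betaB a01 a10 != 0 by rewrite gt_eqF // betaB_gt0.
have I0 : betaB (a01 + k%:R) (a10 + xtri%:R - k%:R) != 0.
  by rewrite gt_eqF // betaB_gt0 // ?add_nat_gt0 ?add_natB_gt0.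
have C0 : ('C(xtri, k)%:R : R) != 0 by rewrite pnatr_eq0 -lt0n bin_gt0.
have half0 : (1 / 2 : R) ^+ xtri != 0 by rewrite expf_neq0 // div1r invr_eq0.
rewrite /BF_Co Rintegral_h_samp_beta_dens // h_samp_half //.
rewrite mulrA [_ * h_samp _ _ _]mulrC h_samp_mul_beta_dens // beta_densE.
by field; rewrite I0 half0 C0 B0.
Qed.
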